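(* Let $n\ge 2$, $h=1/n$, and for $0\le i\le n$ let $\tau_i=-2\sin\frac{i\pi}{2n}$ and $\sigma_i=2\big(2+\cos\frac{i\pi}{n}\big)$. Let $A,D\in\mathbb{R}^{(n-1)\times(n-1)}$ be the tridiagonal matrices with $A_{k,k}=2$, $A_{k,k\pm1}=-1$ and $D_{k,k}=4$, $D_{k,k\pm1}=1$ (other entries zero), and let $B\in\mathbb{R}^{(n-1)\times n}$ have entries $B_{k,k}=-1$, $B_{k,k+1}=1$ ($1\le k\le n-1$), other entries zero. For $0\le j\le n-1$ let $\bm s_j=\big(\sin\frac{j\pi}{n},\dots,\sin\frac{(n-1)j\pi}{n}\big)^{\mathsf T}\in\mathbb{R}^{n-1}$ (so $\bm s_0=\bm 0$) and $\bm c_j=\nu_j\big(\cos\frac{j\pi}{2n},\cos\frac{3j\pi}{2n},\dots,\cos\frac{(2n-1)j\pi}{2n}\big)^{\mathsf T}\in\mathbb{R}^{n}$, with $\nu_0=\frac1{\sqrt2}$ and $\nu_j=1$ for $j\ge1$. Consider the discrete eigenvalue problem: find $\lambda\in\mathbb{R}$ and $(U,V)\in\mathbb{R}^{n\times(n-1)}\times\mathbb{R}^{(n-1)\times n}$, $(U,V)\neq(0,0)$, with $$UA-B^{\mathsf T}VB^{\mathsf T}=\tfrac{h^2}{6}\lambda\,UD,\qquad -BUB+AV=\tfrac{h^2}{6}\lambda\,DV.$$ Then this problem has the following $2n(n-1)$ eigen-solutions, whose eigenvectors $(U,V)$ form a basis of $\mathbb{R}^{n\times(n-1)}\times\mathbb{R}^{(n-1)\times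 n}$ (a complete eigen-decomposition): (i) $n^2-1$ eigen-solutions satisfying the discrete divergence-free constraint $BUD+DVB^{\mathsf T}=0$: $$\lambda_{i,j}=\frac{6}{h^2}\Big(\frac{\tau_i^2}{\sigma_i}+\frac{\tau_j^2}{\sigma_j}\Big),\quad U_{i,j}=\tau_j\sigma_i\,\bm c_i\bm s_j^{\mathsf T},\quad V_{i,j}=-\tau_i\sigma_j\,\bm s_i\bm c_j^{\mathsf T},$$ for $0\le i,j\le n-1$, $(i,j)\neq(0,0)$; (ii) $(n-1)^2$ (discrete curl-free) eigen-solutions with eigenvalue $0$: $$\lambda=0,\quad U^0_{i,j}=\tau_i\,\bm c_i\bm s_j^{\mathsf T},\quad V^0_{i,j}=\tau_j\,\bm s_i\bm c_j^{\mathsf T},\qquad 1\le i,j\le n-1.$$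
   Context: This is the algebraic form of the lowest-order rectangular Nédélec edge-element discretization of the Maxwell eigenvalue problem $\mathrm{curl}\,\mathrm{rot}\,\bm u=\lambda\bm u$ on $[0,1]^2$ with $\bm u\times\bm n=0$ on the boundary, on a uniform $n\times n$ mesh. For column vectors $\bm a,\bm b$, $\bm a\bm b^{\mathsf T}$ denotes the outer product (written $\bm a\otimes\bm b^{\mathsf T}$ in the paper). *)

From HB Require Import structures.
From mathcomp Require Import all_boot all_order all_algebra.
From mathcomp Require Import all_classical all_reals.
From mathcomp Require Import trigo.
Set Implicit Arguments. Unset Strict Implicit. Unset Printing Implicit Defensive.
Import Order.TTheory GRing.Theory Num.Theory.
Local Open Scope ring_scope.

(* Indices are 0-based: paper index k (1 <= k <= n-1) is Rocq index k-1. *)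
Section Defs.
Variable R : realType.
Variable n : nat.

Definition hstep : R := 1 / n%:R.
Definition tau (i : nat) : R := - 2 * sin (i%:R * pi / (2 * n%:R)).
Definition sigma (i : nat) : R := 2 * (2 + cos (i%:R * pi / n%:R)).

Definition Amx : 'M[R]_(n.-1) :=
  \matrix_(k, l) (if (k : nat) == l then 2
                  else if ((k.+1 == l) || (l.+1 == k))%N then -1 else 0).
Definition Dmx : 'M[R]_(n.-1) :=
  \matrix_(k, l) (if (k : nat) == l then 4
                  else if ((k.+1 == l) || (l.+1 == k))%N then 1 else 0).
Definition Bmx : 'M[R]_(n.-1, n) :=
  \matrix_(k, l) (if (l : nat) == k then -1
                  else if (l : nat) == k.+1 then 1 else 0).

Definition svec (j : nat) : 'cV[R]_(n.-1) :=
  \col_k sin ((k.+1)%:R * j%:R * pi / n%:R).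
Definition nu (j : nat) : R := if j == 0%N then 1 / Num.sqrt 2 else 1.
Definition cvec (j : nat) : 'cV[R]_n :=
  \col_k (nu j * cos ((k.*2.+1)%:R * j%:R * pi / (2 * n%:R))).

Definition is_eigsol (lam : R) (U : 'M[R]_(n, n.-1)) (V : 'M[R]_(n.-1, n)) :=
  (U != 0 \/ V != 0) /\
  U *m Amx - Bmx^T *m V *m Bmx^T = (hstep ^+ 2 / 6 * lam) *: (U *m Dmx) /\
  - (Bmx *m U *m Bmx) + Amx *m V = (hstep ^+ 2 / 6 * lam) *: (Dmx *m V).

Definition div_free (U : 'M[R]_(n, n.-1)) (V : 'M[R]_(n.-1, n)) :=
  Bmx *m U *m Dmx + Dmx *m V *m Bmx^T = 0.

Definition lam_ij (i j : nat) : R :=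
  6 / hstep ^+ 2 * (tau i ^+ 2 / sigma i + tau j ^+ 2 / sigma j).
Definition U_ij (i j : nat) : 'M[R]_(n, n.-1) :=
  (tau j * sigma i) *: (cvec i *m (svec j)^T).
Definition V_ij (i j : nat) : 'M[R]_(n.-1, n) :=
  (- (tau i * sigma j)) *: (svec i *m (cvec j)^T).
Definition U0_ij (i j : nat) : 'M[R]_(n, n.-1) :=
  tau i *: (cvec i *m (svec j)^T).
Definition V0_ij (i j : nat) : 'M[R]_(n.-1, n) :=
  tau j *: (svec i *m (cvec j)^T).

(* Index set of all 2n(n-1) eigen-solutions: inl (i,j) with 0<=i,j<=n-1,
   (i,j) <> (0,0), for family (i); inr (i',j') with paper indices
   i = i'+1, j = j'+1 in 1..n-1, for family (ii). *)
Definition Idx := (('I_n * 'I_n) + ('I_(n.-1) * 'I_(n.-1)))%type.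
Definition idx_ok (k : Idx) : bool :=
  match k with
  | inl p => ((p.1 : nat) != 0%N) || ((p.2 : nat) != 0%N)
  | inr _ => true
  end.
Definition Ufam (k : Idx) : 'M[R]_(n, n.-1) :=
  match k with
  | inl p => U_ij p.1 p.2
  | inr p => U0_ij (p.1).+1 (p.2).+1
  end.
Definition Vfam (k : Idx) : 'M[R]_(n.-1, n) :=
  match k with
  | inl p => V_ij p.1 p.2
  | inr p => V0_ij (p.1).+1 (p.2).+1
  end.

End Defs.

Definition is_basis_pairs (R : fieldType) (m p : nat) (I : finType) (P : pred I)
    (U : I -> 'M[R]_(m, p)) (V : I -> 'M[R]_(p, m)) : Prop :=
  (forall a : I -> R,
      \sum_(k | P k) a k *: U k = 0 -> \sum_(k | P k) a k *: V k = 0 ->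
      forall k, P k -> a k = 0) /\
  (forall (U1 : 'M[R]_(m, p)) (V1 : 'M[R]_(p, m)), exists a : I -> R,
      U1 = \sum_(k | P k) a k *: U k /\ V1 = \sum_(k | P k) a k *: V k).

From Pilot Require Import Defs.
From HB Require Import structures.
From mathcomp Require Import all_boot all_order all_algebra.
From mathcomp Require Import all_classical all_reals.
From mathcomp Require Import trigo.
From mathcomp Require Import ring lra zify.
Set Implicit Arguments.
Unset Strict Implicit.
Unset Printing Implicit Defensive.
Import Order.TTheory GRing.Theory Num.Theory.
Local Open Scope ring_scope.

(* The sine vectors s_j are eigenvectors of the tridiagonal matrices A and D,
   with eigenvalues tau_j^2 and sigma_j, and B, B^T intertwine them with the
   cosine vectors: B c_j = tau_j s_j and B^T s_j = tau_j c_j.  Hence on a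
   rank-one pair (a c_i s_j^T, b s_i c_j^T) both equations reduce to a 2x2
   generalized eigenproblem for (a, b), whose two solutions are the families
   (i) and (ii).  For completeness, the s_j (j >= 1) and the c_j are
   eigenvectors of the symmetric matrices A and B^T B for the distinct
   eigenvalues tau_j^2, so the matrices S and C having them as columns are
   invertible; every pair is (C P S^T, S Q C^T), and the coefficients along the
   eigen-solutions are recovered from (P, Q) by inverting 2x2 blocks whose
   determinant tau_j^2 sigma_i + tau_i^2 sigma_j is positive. *)

Lemma sum_ord_dirac (R : pzSemiRingType) (N m : nat) (c : R) (F : nat -> R) :
  \sum_(l < N) (if (l : nat) == m then c else 0) * F l = if (m < N)%N then c * F m else 0.
Proof.
case: ltnP => [lt_mN | le_Nm].
  rewrite (bigD1 (Ordinal lt_mN)) //= eqxx big1 ?addr0 // => l ne_lm.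
  case: eqP => [eq_lm|_]; last exact: mul0r.
  by case/negP: ne_lm; apply/eqP/val_inj.
apply: big1 => l _; case: eqP => [eq_lm|_]; last exact: mul0r.
by have := ltn_ord l; rewrite eq_lm ltnNge le_Nm.
Qed.

Lemma sum_pair_curry (V : nmodType) (I J : finType) (F : I * J -> V) :
  \sum_p F p = \sum_i \sum_j F (i, j).
Proof. by rewrite pair_bigA; apply: eq_bigr => -[]. Qed.

Definition tridiag {R : pzRingType} N (a b : R) : 'M[R]_N :=
  \matrix_(k, l) (if (k : nat) == l then a
                  else if ((k.+1 == l) || (l.+1 == k))%N then b else 0).

Lemma tridiag_tr (R : pzRingType) N (a b : R) : (tridiag N a b)^T = tridiag N a b.
Proof. by apply/matrixP => k l; rewrite !mxE eq_sym orbC. Qed.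

Lemma tridiag_mul_col (R : pzRingType) N (a b : R) (f : nat -> R) :
  f 0%N = 0 -> f N.+1 = 0 ->
  tridiag N a b *m \col_k f k.+1 = \col_k (a * f k.+1 + b * (f k + f k.+2)).
Proof.
move=> f0 fN; apply/matrixP => k z; rewrite /tridiag !mxE.
have entryE (l : nat) :
    (if (k : nat) == l then a else if (k.+1 == l) || (l.+1 == k) then b else 0) =
    (if l == k then a else 0) + (if l == k.+1 then b else 0) + (if l.+1 == k then b else 0).
  have [<-|ne_kl] := eqVneq (k : nat) l; first by rewrite ltn_eqF // gtn_eqF // !addr0.
  rewrite add0r [l == _]eq_sym.
  by case: eqP => [<-|_]; case: eqP => //= [|_]; rewrite ?addr0 ?add0r //; lia.
under eq_bigr => l _ do rewrite !mxE entryE !mulrDl.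
rewrite !big_split /= (sum_ord_dirac _ k a (fun l => f l.+1)).
rewrite (sum_ord_dirac _ k.+1 b (fun l => f l.+1)) ltn_ord.
rewrite mulrDr (addrC (b * f k)) addrA; congr (_ + _ + _); clear entryE.
  case: ltnP => // le_Nk; suff -> : k.+2 = N.+1 by rewrite fN mulr0.
  by have := ltn_ord k; lia.
case: k => [[|k] lt_kN] /=; first by rewrite f0 mulr0 big1 // => l _; rewrite mul0r.
under eq_bigr => l _ do rewrite eqSS.
by rewrite (sum_ord_dirac _ k b (fun l => f l.+1)) (ltn_trans _ lt_kN).
Qed.

Lemma outer_mulmx (R : comPzRingType) p q r (u : 'cV[R]_p) (v : 'cV[R]_q)
    (K : 'M[R]_(q, r)) :
  u *m v^T *m K = u *m (K^T *m v)^T.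
Proof. by rewrite trmx_mul trmxK mulmxA. Qed.

Lemma mulmx_outer_mulmx (R : comPzRingType) p q r s (M : 'M[R]_(r, p))
    (u : 'cV[R]_p) (v : 'cV[R]_q) (K : 'M[R]_(q, s)) :
  M *m (u *m v^T) *m K = (M *m u) *m (K^T *m v)^T.
Proof. by rewrite mulmxA outer_mulmx. Qed.

Lemma scale_outer (R : comPzRingType) p q (a b : R) (u : 'cV[R]_p) (v : 'cV[R]_q) :
  (a *: u) *m (b *: v)^T = (a * b) *: (u *m v^T).
Proof. by rewrite linearZ /= -scalemxAl -scalemxAr scalerA. Qed.

Lemma outer_neq0 (R : fieldType) p q (u : 'cV[R]_p) (v : 'cV[R]_q) :
  u != 0 -> v != 0 -> u *m v^T != 0.
Proof.
move=> u_neq0 v_neq0; rewrite mulmx_free_eq0 // /row_free eqn_leq rank_leq_row.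
by rewrite lt0n mxrank_eq0 trmx_eq0.
Qed.

Lemma scaled_outer_neq0 (R : fieldType) p q (a : R) (u : 'cV[R]_p) (v : 'cV[R]_q) :
  a != 0 -> u != 0 -> v != 0 -> a *: (u *m v^T) != 0.
Proof. by move=> a_neq0 u_neq0 v_neq0; rewrite scalemx_eq0 negb_or a_neq0 outer_neq0. Qed.

Lemma mulmx_outer_sum (R : comPzRingType) p q p' q' (C : 'M[R]_(p, p'))
    (P : 'M[R]_(p', q')) (S : 'M[R]_(q, q')) :
  C *m P *m S^T = \sum_i \sum_j P i j *: (col i C *m (col j S)^T).
Proof.
apply/matrixP => r t; rewrite !mxE summxE.
under [RHS]eq_bigr => i _ do rewrite summxE.
rewrite exchange_big; apply: eq_bigr => j _; rewrite mxE big_distrl.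
by apply: eq_bigr => i _; rewrite !mxE big_ord1 !mxE /=; ring.
Qed.

Lemma sym_eigenvectors_orthogonal (R : fieldType) p (M : 'M[R]_p) (u v : 'cV[R]_p)
    (a b : R) :
  M^T = M -> M *m u = a *: u -> M *m v = b *: v -> a != b -> u^T *m v = 0.
Proof.
move=> symM Mu Mv ne_ab; apply/eqP.
suff : (a - b) *: (u^T *m v) == 0 by rewrite scalemx_eq0 subr_eq0 (negbTE ne_ab).
rewrite scalerBl [b *: _]scalemxAr -Mv.
have -> : a *: (u^T *m v) = u^T *m (M *m v).
  by rewrite -symM mulmxA -trmx_mul Mu linearZ /= scalemxAl.
by rewrite subrr.
Qed.

Lemma dot_self_neq0 (R : realFieldType) p (v : 'cV[R]_p) : v != 0 -> (v^T *m v) 0 0 != 0.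
Proof.
apply: contraNneq; rewrite mxE => /eqP; rewrite psumr_eq0 => [/allP v0|k _]; last first.
  by rewrite mxE -expr2 sqr_ge0.
apply/eqP/matrixP => k z; rewrite ord1 mxE.
by have := v0 k (mem_index_enum k); rewrite mxE -expr2 sqrf_eq0 => /eqP.
Qed.

Lemma unitmx_orthogonal_cols (R : realFieldType) p (M : 'M[R]_p) :
  (forall j j', j != j' -> (col j M)^T *m col j' M = 0) -> (forall j, col j M != 0) ->
  M \in unitmx.
Proof.
move=> orth nz.
have gramE j j' : (M^T *m M) j j' = ((col j M)^T *m col j' M) 0 0.
  by rewrite !mxE; apply: eq_bigr => k _; rewrite !mxE.
have -> : M \in unitmx = (M^T *m M \in unitmx) by rewrite unitmx_mul unitmx_tr andbb.
have -> : M^T *m M = diag_mx (\row_j (M^T *m M) j j).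
  apply/matrixP => j j'; rewrite [RHS]mxE.
  have [<-|ne] := eqVneq j j'; first by rewrite [in RHS]mxE mulr1n.
  by rewrite mulr0n gramE orth ?mxE.
rewrite unitmxE det_diag unitfE; apply/prodf_neq0 => j _.
by rewrite mxE gramE dot_self_neq0.
Qed.

Lemma mulmxLR_unit_eq0 (R : comUnitRingType) p q (C : 'M[R]_p) (S : 'M[R]_q)
    (P : 'M[R]_(p, q)) :
  C \in unitmx -> S \in unitmx -> C *m P *m S = 0 -> P = 0.
Proof.
move=> unitC unitS CPS0.
by rewrite -[P](mulKmx unitC) -[C *m P](mulmxK unitS) CPS0 mul0mx mulmx0.
Qed.

Lemma mulmxLR_invK (R : comUnitRingType) p q (C : 'M[R]_p) (S : 'M[R]_q)
    (U : 'M[R]_(p, q)) :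
  C \in unitmx -> S \in unitmx -> C *m (invmx C *m U *m invmx S) *m S = U.
Proof. by move=> unitC unitS; rewrite -mulmxA mulmxKV // mulKVmx. Qed.

Section Trigonometry.
Variable R : realType.
Implicit Types (x : R) (m : nat).

Lemma sin_natr_mulpi m : sin (m%:R * pi) = 0 :> R.
Proof.
elim: m => [|m IHm]; first by rewrite mul0r sin0.
by rewrite -natr1 mulrDl mul1r sinDpi IHm oppr0.
Qed.

Lemma cos_sin_half x : cos x = 1 - 2 * sin (x / 2) ^+ 2.
Proof. by rewrite [in LHS](splitr x) -mulr2n cos_mulr2n cos2sin2; ring. Qed.

Lemma natr_double_succ m : (m.*2.+1)%:R = 2 * m%:R + 1 :> R.
Proof. by rewrite -natr1 -mul2n natrM. Qed.

Lemma sin_natr_rec m x :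
  sin (m%:R * x) + sin (m.+2%:R * x) = 2 * cos x * sin (m.+1%:R * x).
Proof.
have -> : m%:R * x = m.+1%:R * x - x by rewrite -natr1; ring.
have -> : m.+2%:R * x = m.+1%:R * x + x by rewrite -(natr1 m.+1); ring.
by rewrite sinB sinD; ring.
Qed.

Lemma sin_natr_diff m x :
  sin (m%:R * x) - sin (m.+1%:R * x) = - 2 * sin (x / 2) * cos ((m.*2.+1)%:R * (x / 2)).
Proof.
have -> : m%:R * x = (m.*2.+1)%:R * (x / 2) - x / 2.
  by rewrite natr_double_succ; field.
have -> : m.+1%:R * x = (m.*2.+1)%:R * (x / 2) + x / 2.
  by rewrite natr_double_succ -natr1; field.
by rewrite sinB sinD; ring.
Qed.

Lemma cos_odd_diff m x :
  cos ((m.+1.*2.+1)%:R * (x / 2)) - cos ((m.*2.+1)%:R * (x / 2)) =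
  - 2 * sin (x / 2) * sin (m.+1%:R * x).
Proof.
have -> : (m.+1.*2.+1)%:R * (x / 2) = m.+1%:R * x + x / 2.
  by rewrite natr_double_succ -natr1; field.
have -> : (m.*2.+1)%:R * (x / 2) = m.+1%:R * x - x / 2.
  by rewrite natr_double_succ -natr1; field.
by rewrite cosD cosB; ring.
Qed.

End Trigonometry.

Section Discretization.
Variables (R : realType) (N : nat).
Local Notation n := N.+1.
Local Notation tau := (tau R n).
Local Notation sigma := (sigma R n).
Local Notation svec := (svec R n).
Local Notation cvec := (cvec R n).
Local Notation Amx := (Amx R n).
Local Notation Dmx := (Dmx R n).
Local Notation Bmx := (Bmx R n).
Local Notation cs i j := (cvec i *m (svec j)^T).
Local Notation sc i j := (svec i *m (cvec j)^T).

Lemma AmxE : Amx = tridiag N 2 (-1).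
Proof. by []. Qed.

Lemma DmxE : Dmx = tridiag N 4 1.
Proof. by []. Qed.

Lemma trAmx : Amx^T = Amx.
Proof. exact: tridiag_tr. Qed.

Lemma trDmx : Dmx^T = Dmx.
Proof. exact: tridiag_tr. Qed.

Lemma Bmx_entry (k l : nat) :
  (if l == k then -1 else if l == k.+1 then 1 else 0) =
  (if l == k then -1 else 0) + (if l == k.+1 then 1 else 0) :> R.
Proof. by have [->|_] := eqVneq l k; rewrite ?add0r // ltn_eqF ?addr0. Qed.

Lemma trBmx_mul_col (f : nat -> R) : f 0%N = 0 -> f n = 0 ->
  Bmx^T *m \col_k f k.+1 = \col_l (f l - f l.+1).
Proof.
move=> f0 fn; apply/matrixP => l z; rewrite !mxE.
under eq_bigr => k _ do rewrite !mxE Bmx_entry mulrDl [(l : nat) == _]eq_sym.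
rewrite big_split /= (sum_ord_dirac _ l (-1) (fun k => f k.+1)) addrC mulN1r.
congr (_ + _); last first.
  case: ltnP => // le_Nl; suff -> : (l : nat) = N by rewrite fn oppr0.
  by have := ltn_ord l; lia.
case: l => [[|l] lt_ln] /=; first by rewrite f0 big1 // => k _; rewrite mul0r.
under eq_bigr => k _ do rewrite eqSS eq_sym.
by rewrite (sum_ord_dirac _ l 1 (fun k => f k.+1)) -ltnS lt_ln mul1r.
Qed.

Lemma Bmx_mul_col (g : nat -> R) : Bmx *m \col_l g l = \col_k (g k.+1 - g k).
Proof.
apply/matrixP => k z; rewrite !mxE.
under eq_bigr => l _ do rewrite !mxE Bmx_entry mulrDl.
rewrite big_split /= (sum_ord_dirac _ k (-1) g) (sum_ord_dirac _ k.+1 1 g).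
have lt_kN : (k < N)%N := ltn_ord k.
by rewrite !ltnS lt_kN (ltnW lt_kN) mulN1r mul1r addrC.
Qed.

Definition angle (j : nat) : R := j%:R * pi / n%:R.

Lemma svecE j : svec j = \col_k sin (k.+1%:R * angle j).
Proof. by apply/matrixP => k z; rewrite !mxE /angle !mulrA. Qed.

Lemma cvecE j : cvec j = \col_k (nu R j * cos ((k.*2.+1)%:R * (angle j / 2))).
Proof.
apply/matrixP => k z; rewrite !mxE /angle; congr (_ * cos _).
by field; rewrite nat1r pnatr_eq0.
Qed.

Lemma tauE j : tau j = - 2 * sin (angle j / 2).
Proof.
rewrite /Defs.tau /angle; congr (_ * sin _).
by field; rewrite nat1r pnatr_eq0.
Qed.

Lemma sin_n_angle j : sin (n%:R * angle j) = 0.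
Proof. by rewrite /angle mulrCA divff ?pnatr_eq0 // mulr1 sin_natr_mulpi. Qed.

Lemma tau_nu j : tau j * nu R j = tau j.
Proof.
rewrite /nu; case: eqP => [->|_]; last exact: mulr1.
by rewrite /Defs.tau !(mul0r, sin0, mulr0).
Qed.

Lemma Amx_svec j : Amx *m svec j = tau j ^+ 2 *: svec j.
Proof.
rewrite svecE AmxE (@tridiag_mul_col _ _ _ _ (fun m => sin (m%:R * angle j))) /=;
  rewrite ?mul0r ?sin0 ?sin_n_angle //.
by apply/matrixP => k z; rewrite !mxE sin_natr_rec tauE cos_sin_half; ring.
Qed.

Lemma Dmx_svec j : Dmx *m svec j = sigma j *: svec j.
Proof.
rewrite svecE DmxE (@tridiag_mul_col _ _ _ _ (fun m => sin (m%:R * angle j))) /=;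
  rewrite ?mul0r ?sin0 ?sin_n_angle //.
by apply/matrixP => k z; rewrite !mxE sin_natr_rec /Defs.sigma -/(angle j); ring.
Qed.

Lemma trBmx_svec j : Bmx^T *m svec j = tau j *: cvec j.
Proof.
rewrite svecE (@trBmx_mul_col (fun m => sin (m%:R * angle j))) ?mul0r ?sin0 ?sin_n_angle //.
by rewrite cvecE; apply/matrixP => l z; rewrite !mxE mulrA tau_nu tauE sin_natr_diff.
Qed.

Lemma Bmx_cvec j : Bmx *m cvec j = tau j *: svec j.
Proof.
rewrite cvecE (Bmx_mul_col (fun l => nu R j * cos ((l.*2.+1)%:R * (angle j / 2)))) svecE.
by apply/matrixP => k z; rewrite !mxE -mulrBr cos_odd_diff -tau_nu tauE; ring.
Qed.

Lemma trBmx_Bmx_cvec j : Bmx^T *m Bmx *m cvec j = tau j ^+ 2 *: cvec j.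
Proof. by rewrite -mulmxA Bmx_cvec -scalemxAr trBmx_svec scalerA. Qed.

Lemma svec0 : svec 0 = 0.
Proof. by apply/matrixP => k z; rewrite !mxE mulr0 !mul0r sin0. Qed.

Lemma sigma_gt0 j : 0 < sigma j.
Proof. by rewrite /Defs.sigma; have := @cos_geN1 R (angle j); lra. Qed.

Lemma angle_ge0 j : 0 <= angle j.
Proof. by rewrite /angle !mulr_ge0 ?invr_ge0 ?ler0n ?pi_ge0. Qed.

Lemma angle_gt0 j : (0 < j)%N -> 0 < angle j.
Proof. by move=> j_gt0; rewrite /angle !mulr_gt0 ?invr_gt0 ?ltr0n ?pi_gt0. Qed.

Lemma angle_ltpi j : (j < n)%N -> angle j < pi.
Proof.
move=> lt_jn; rewrite /angle ltr_pdivrMr ?ltr0n // mulrC ltr_pM2l ?pi_gt0 //.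
by rewrite ltr_nat.
Qed.

Lemma tau_sqr_lt i j : (i < j)%N -> (j < n)%N -> tau i ^+ 2 < tau j ^+ 2.
Proof.
move=> lt_ij lt_jn; rewrite !tauE.
have pi0 := pi_gt0 R; have ai_ge0 := angle_ge0 i; have aj_ltpi := angle_ltpi lt_jn.
have lt_angle : angle i < angle j.
  by rewrite /angle ltr_pM2r ?invr_gt0 ?ltr0n // ltr_pM2r // ltr_nat.
have lt_sin : sin (angle i / 2) < sin (angle j / 2).
  by rewrite ltr_sin ?in_itv /=; try (apply/andP; split); lra.
have : 0 <= sin (angle i / 2) by apply: sin_ge0_pi; apply/andP; split; lra.
nra.
Qed.

Lemma tau_sqr_inj i j : (i < n)%N -> (j < n)%N -> i != j -> tau i ^+ 2 != tau j ^+ 2.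
Proof.
move=> lt_in lt_jn; case: ltngtP => // [lt_ij|lt_ji] _.
  by rewrite lt_eqF // tau_sqr_lt.
by rewrite gt_eqF // tau_sqr_lt.
Qed.

Lemma tau_neq0 j : (0 < j)%N -> (j < n)%N -> tau j != 0.
Proof.
move=> j_gt0 lt_jn; rewrite -sqrf_eq0 gt_eqF // (le_lt_trans _ (tau_sqr_lt j_gt0 lt_jn)) //.
by rewrite sqr_ge0.
Qed.

Lemma svec_neq0 j : (0 < j)%N -> (j < n)%N -> svec j != 0.
Proof.
move=> j_gt0 lt_jn; have N_gt0 : (0 < N)%N by lia.
apply/eqP => /matrixP/(_ (Ordinal N_gt0) ord0); rewrite svecE !mxE mul1r => /eqP.
by rewrite gt_eqF // sin_gt0_pi // angle_gt0 // angle_ltpi.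
Qed.

Lemma cvec_neq0 j : (j < n)%N -> cvec j != 0.
Proof.
move=> lt_jn; apply/eqP => /matrixP/(_ ord0 ord0); rewrite cvecE !mxE mul1r => /eqP.
rewrite gt_eqF // mulr_gt0 //.
  by rewrite /nu; case: eqP => // _; rewrite div1r invr_gt0 sqrtr_gt0 ltr0n.
apply: cos_gt0_pihalf; have := angle_ge0 j; have := angle_ltpi lt_jn; have := pi_gt0 R.
by move=> *; apply/andP; split; lra.
Qed.

Lemma cs_mulmx_Amx i j : cs i j *m Amx = tau j ^+ 2 *: cs i j.
Proof. by rewrite outer_mulmx trAmx Amx_svec linearZ scalemxAr. Qed.

Lemma cs_mulmx_Dmx i j : cs i j *m Dmx = sigma j *: cs i j.
Proof. by rewrite outer_mulmx trDmx Dmx_svec linearZ scalemxAr. Qed.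

Lemma Amx_mulmx_sc i j : Amx *m sc i j = tau i ^+ 2 *: sc i j.
Proof. by rewrite mulmxA Amx_svec scalemxAl. Qed.

Lemma Dmx_mulmx_sc i j : Dmx *m sc i j = sigma i *: sc i j.
Proof. by rewrite mulmxA Dmx_svec scalemxAl. Qed.

Lemma trBmx_sc_trBmx i j : Bmx^T *m sc i j *m Bmx^T = (tau i * tau j) *: cs i j.
Proof. by rewrite mulmx_outer_mulmx trmxK trBmx_svec Bmx_cvec scale_outer. Qed.

Lemma Bmx_cs_Bmx i j : Bmx *m cs i j *m Bmx = (tau i * tau j) *: sc i j.
Proof. by rewrite mulmx_outer_mulmx trBmx_svec Bmx_cvec scale_outer. Qed.

Lemma is_eigsol_rank_one i j (a b lam : R) :
  a *: cs i j != 0 \/ b *: sc i j != 0 ->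
  a * tau j ^+ 2 - b * (tau i * tau j) = hstep R n ^+ 2 / 6 * lam * (a * sigma j) ->
  b * tau i ^+ 2 - a * (tau i * tau j) = hstep R n ^+ 2 / 6 * lam * (b * sigma i) ->
  is_eigsol lam (a *: cs i j) (b *: sc i j).
Proof.
move=> nz eqU eqV; split=> //; split.
  rewrite -scalemxAr -!scalemxAl cs_mulmx_Amx trBmx_sc_trBmx cs_mulmx_Dmx.
  by rewrite !scalerA -scalerBl eqU mulrA.
rewrite -!scalemxAr -scalemxAl Bmx_cs_Bmx Amx_mulmx_sc Dmx_mulmx_sc.
by rewrite !scalerA addrC -scalerBl eqV mulrA.
Qed.

Lemma div_free_rank_one i j (a b : R) :
  a * (tau i * sigma j) + b * (sigma i * tau j) = 0 -> div_free (a *: cs i j) (b *: sc i j).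
Proof.
move=> coef0; rewrite /div_free -!scalemxAr -!scalemxAl !mulmx_outer_mulmx trmxK trDmx.
rewrite Bmx_cvec Dmx_svec Dmx_svec Bmx_cvec !scale_outer !scalerA.
by rewrite -scalerDl coef0 scale0r.
Qed.

Lemma div_free_eigsol i j : (i < n)%N -> (j < n)%N -> (i != 0%N) || (j != 0%N) ->
  is_eigsol (lam_ij R n i j) (U_ij R n i j) (V_ij R n i j) /\
  div_free (U_ij R n i j) (V_ij R n i j).
Proof.
move=> lt_in lt_jn nz_ij.
have si := lt0r_neq0 (sigma_gt0 i); have sj := lt0r_neq0 (sigma_gt0 j).
have n_neq0 : 1 + N%:R != 0 :> R by rewrite nat1r pnatr_eq0.
split; last by apply: div_free_rank_one; ring.
apply: is_eigsol_rank_one; last 2 first.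
- by rewrite /lam_ij /hstep; field; rewrite si sj n_neq0.
- by rewrite /lam_ij /hstep; field; rewrite si sj n_neq0.
have [j0|j_neq0] := eqVneq j 0%N.
  have i_gt0 : (0 < i)%N by move: nz_ij; rewrite j0 orbF lt0n.
  right; apply: scaled_outer_neq0; [|exact: svec_neq0|exact: cvec_neq0].
  by rewrite oppr_eq0 mulf_neq0 // tau_neq0.
have j_gt0 : (0 < j)%N by rewrite lt0n.
left; apply: scaled_outer_neq0; [|exact: cvec_neq0|exact: svec_neq0].
by rewrite mulf_neq0 // tau_neq0.
Qed.

Lemma curl_free_eigsol i j : (0 < i < n)%N -> (0 < j < n)%N ->
  is_eigsol 0 (U0_ij R n i j) (V0_ij R n i j).
Proof.
move=> /andP[i_gt0 lt_in] /andP[j_gt0 lt_jn].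
apply: is_eigsol_rank_one; [|by rewrite mulr0 mul0r; ring..].
left; apply: scaled_outer_neq0; [exact: tau_neq0|exact: cvec_neq0|exact: svec_neq0].
Qed.

Definition Smx : 'M[R]_N := \matrix_(k, j) svec j.+1 k 0.
Definition Cmx : 'M[R]_n := \matrix_(k, j) cvec j k 0.

Lemma col_Smx j : col j Smx = svec j.+1.
Proof. by apply/matrixP => k z; rewrite !mxE. Qed.

Lemma col_Cmx j : col j Cmx = cvec j.
Proof. by apply/matrixP => k z; rewrite !mxE. Qed.

Lemma Smx_unit : Smx \in unitmx.
Proof.
apply: unitmx_orthogonal_cols => [j j' ne_jj'|j]; rewrite !col_Smx; last first.
  by apply: svec_neq0; rewrite ?ltnS.
apply: (sym_eigenvectors_orthogonal trAmx (Amx_svec _) (Amx_svec _)).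
by apply: tau_sqr_inj; rewrite ?ltnS.
Qed.

Lemma Cmx_unit : Cmx \in unitmx.
Proof.
apply: unitmx_orthogonal_cols => [j j' ne_jj'|j]; rewrite !col_Cmx; last exact: cvec_neq0.
have symBB : (Bmx^T *m Bmx)^T = Bmx^T *m Bmx by rewrite trmx_mul trmxK.
apply: (sym_eigenvectors_orthogonal symBB (trBmx_Bmx_cvec _) (trBmx_Bmx_cvec _)).
exact: tau_sqr_inj.
Qed.

Definition coefU (a : Idx n -> R) : 'M[R]_(n, N) :=
  \matrix_(i, j) (a (inl (i, lift ord0 j)) * (tau j.+1 * sigma i)
                  + oapp (fun i' => a (inr (i', j)) * tau i) 0 (unlift ord0 i)).

Definition coefV (a : Idx n -> R) : 'M[R]_(N, n) :=
  \matrix_(i, j) (a (inl (lift ord0 i, j)) * - (tau i.+1 * sigma j)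
                  + oapp (fun j' => a (inr (i, j')) * tau j) 0 (unlift ord0 j)).

Lemma coefU_ord0 a j : coefU a ord0 j = a (inl (ord0, lift ord0 j)) * (tau j.+1 * sigma 0).
Proof. by rewrite mxE unlift_none addr0. Qed.

Lemma coefU_lift a i j :
  coefU a (lift ord0 i) j =
  a (inl (lift ord0 i, lift ord0 j)) * (tau j.+1 * sigma i.+1) + a (inr (i, j)) * tau i.+1.
Proof. by rewrite mxE liftK. Qed.

Lemma coefV_ord0 a i : coefV a i ord0 = a (inl (lift ord0 i, ord0)) * - (tau i.+1 * sigma 0).
Proof. by rewrite mxE unlift_none addr0. Qed.

Lemma coefV_lift a i j :
  coefV a i (lift ord0 j) =
  a (inl (lift ord0 i, lift ord0 j)) * - (tau i.+1 * sigma j.+1) + a (inr (i, j)) * tau j.+1.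
Proof. by rewrite mxE liftK. Qed.

Lemma sum_Ufam a : \sum_(k | idx_ok k) a k *: @Ufam R n k = Cmx *m coefU a *m Smx^T.
Proof.
have U_ij_0 i : U_ij R n i 0 = 0 by rewrite /U_ij svec0 trmx0 mulmx0 scaler0.
rewrite big_rmcond => [|[[i j]|//]]; last first.
  by rewrite negb_or !negbK => /andP[_ /eqP j0] /=; rewrite j0 U_ij_0 scaler0.
rewrite big_sumType /= !sum_pair_curry /=.
under eq_bigr => i _ do rewrite big_ord_recl U_ij_0 scaler0 add0r.
rewrite mulmx_outer_sum !(big_ord_recl N) -addrA; congr (_ + _).
  by apply: eq_bigr => j _; rewrite coefU_ord0 col_Cmx col_Smx scalerA.
rewrite -big_split; apply: eq_bigr => i _; rewrite -big_split; apply: eq_bigr => j _.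
by rewrite coefU_lift col_Cmx col_Smx scalerDl !scalerA.
Qed.

Lemma sum_Vfam a : \sum_(k | idx_ok k) a k *: @Vfam R n k = Smx *m coefV a *m Cmx^T.
Proof.
have V_ij_0 j : V_ij R n 0 j = 0 by rewrite /V_ij svec0 mul0mx scaler0.
rewrite big_rmcond => [|[[i j]|//]]; last first.
  by rewrite negb_or !negbK => /andP[/eqP i0 _] /=; rewrite i0 V_ij_0 scaler0.
rewrite big_sumType /= !sum_pair_curry /= big_ord_recl big1 ?add0r; last first.
  by move=> j _; rewrite V_ij_0 scaler0.
rewrite mulmx_outer_sum -big_split; apply: eq_bigr => i _.
rewrite /= !(big_ord_recl N) -addrA -big_split; congr (_ + _).
  by rewrite coefV_ord0 col_Cmx col_Smx scalerA.
by apply: eq_bigr => j _; rewrite coefV_lift col_Cmx col_Smx scalerDl !scalerA.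
Qed.

Definition block_det (i j : nat) : R :=
  tau j.+1 ^+ 2 * sigma i.+1 + tau i.+1 ^+ 2 * sigma j.+1.

Lemma tau_succ_neq0 (i : 'I_N) : tau i.+1 != 0.
Proof. by apply: tau_neq0; rewrite ?ltnS. Qed.

Lemma block_det_gt0 (i j : 'I_N) : 0 < block_det i j.
Proof.
by rewrite addr_gt0 // mulr_gt0 ?sigma_gt0 // exprn_even_gt0 //= tau_succ_neq0.
Qed.

(* For I = i + 1, J = j + 1 the coefficients of (U_{I,J}, V_{I,J}) and
   (U^0_{I,J}, V^0_{I,J}) enter the entries (I, j) of P and (i, J) of Q through
   the block [[tau_J sigma_I, tau_I], [- tau_I sigma_J, tau_J]], whose
   determinant is block_det i j; coefs applies its inverse. *)
Definition coefs (P : 'M[R]_(n, N)) (Q : 'M[R]_(N, n)) (k : Idx n) : R :=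
  match k with
  | inl (i, j) =>
    match unlift ord0 i, unlift ord0 j with
    | None, None => 0
    | None, Some j' => P i j' / (tau j'.+1 * sigma 0)
    | Some i', None => Q i' j / - (tau i'.+1 * sigma 0)
    | Some i', Some j' => (tau j'.+1 * P i j' - tau i'.+1 * Q i' j) / block_det i' j'
    end
  | inr (i, j) =>
    (tau i.+1 * sigma j.+1 * P (lift ord0 i) j + tau j.+1 * sigma i.+1 * Q i (lift ord0 j))
      / block_det i j
  end.

Lemma coefU_coefs P Q : coefU (coefs P Q) = P.
Proof.
apply/matrixP => i j; have tj := tau_succ_neq0 j.
case: (unliftP ord0 i) => [i'|] ->; rewrite ?coefU_lift ?coefU_ord0 /coefs !liftK ?unlift_none /=.
  have := lt0r_neq0 (block_det_gt0 i' j); have := tau_succ_neq0 i'.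
  by rewrite /block_det => ti Dij; field.
by rewrite divfK // mulf_neq0 // lt0r_neq0 // sigma_gt0.
Qed.

Lemma coefV_coefs P Q : coefV (coefs P Q) = Q.
Proof.
apply/matrixP => i j; have ti := tau_succ_neq0 i.
case: (unliftP ord0 j) => [j'|] ->; rewrite ?coefV_lift ?coefV_ord0 /coefs !liftK ?unlift_none /=.
  have := lt0r_neq0 (block_det_gt0 i j'); have := tau_succ_neq0 j'.
  by rewrite /block_det => tj Dij; field.
by rewrite divfK // oppr_eq0 mulf_neq0 // lt0r_neq0 // sigma_gt0.
Qed.

Lemma coefs_coefUV a k : idx_ok k -> coefs (coefU a) (coefV a) k = a k.
Proof.
have s0 := lt0r_neq0 (sigma_gt0 0).
case: k => [[i j]|[i j]] /=; last first.
  move=> _; rewrite coefU_lift coefV_lift; have := lt0r_neq0 (block_det_gt0 i j).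
  by rewrite /block_det => Dij; field.
case: (unliftP ord0 i) => [i'|] ->; case: (unliftP ord0 j) => [j'|] -> //= _.
- rewrite coefU_lift coefV_lift; have := lt0r_neq0 (block_det_gt0 i' j').
  by rewrite /block_det => Dij; field.
- by rewrite coefV_ord0 mulfK // oppr_eq0 mulf_neq0 // tau_succ_neq0.
- by rewrite coefU_ord0 mulfK // mulf_neq0 // tau_succ_neq0.
Qed.

Lemma coefs0 k : coefs 0 0 k = 0.
Proof.
case: k => [[i j]|[i j]] /=; last by rewrite !mxE !mulr0 addr0 mul0r.
by case: (unlift ord0 i) => [i'|]; case: (unlift ord0 j) => [j'|];
  rewrite ?mxE ?mulr0 ?subr0 ?mul0r.
Qed.

Lemma basis_pairs : is_basis_pairs (@idx_ok n) (@Ufam R n) (@Vfam R n).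
Proof.
have unitCT : Cmx^T \in unitmx by rewrite unitmx_tr Cmx_unit.
have unitST : Smx^T \in unitmx by rewrite unitmx_tr Smx_unit.
split=> [a sumU0 sumV0 k ok_k | U V].
  rewrite sum_Ufam in sumU0; rewrite sum_Vfam in sumV0.
  rewrite -coefs_coefUV // (mulmxLR_unit_eq0 Cmx_unit unitST sumU0).
  by rewrite (mulmxLR_unit_eq0 Smx_unit unitCT sumV0) coefs0.
exists (coefs (invmx Cmx *m U *m invmx Smx^T) (invmx Smx *m V *m invmx Cmx^T)).
by rewrite sum_Ufam sum_Vfam coefU_coefs coefV_coefs !mulmxLR_invK ?Cmx_unit ?Smx_unit.
Qed.

End Discretization.

Theorem theorem3p1 (R : realType) (n : nat) (hn : (2 <= n)%N) :
  (* (i) divergence-free eigen-solutions, 0 <= i,j <= n-1, (i,j) <> (0,0) *)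
  (forall i j : 'I_n, ((i : nat) != 0%N) || ((j : nat) != 0%N) ->
     is_eigsol (lam_ij R n i j) (U_ij R n i j) (V_ij R n i j) /\
     div_free (U_ij R n i j) (V_ij R n i j)) /\
  (* (ii) eigenvalue-0 eigen-solutions, paper indices i'+1, j'+1 in 1..n-1 *)
  (forall i j : 'I_(n.-1),
     is_eigsol 0 (U0_ij R n i.+1 j.+1) (V0_ij R n i.+1 j.+1)) /\
  (* all these eigenvectors together form a basis *)
  is_basis_pairs (@idx_ok n) (@Ufam R n) (@Vfam R n).
Proof.
case: n hn => // N _; split; [|split].
- by move=> i j; apply: div_free_eigsol.
- by move=> i j; apply: curl_free_eigsol; rewrite /= ltnS ltn_ord.
- exact: basis_pairs.
Qed.
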